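(* Let $X\subset Y$ be spaces, $\alpha<\omega_1$, and let $\mathcal C$ be a Suslin scheme on $X$ satisfying $\mathcal A(\overline{\mathcal C}^Y)=X$. Then: (i) if $\alpha$ is even, $\mathbf R_\alpha(\mathcal C,Y)\setminus X=\{y\in Y\setminus X: D_{\mathrm{iie}}^{\alpha'}(S_{\mathcal C}(y))\ne\emptyset\}$; (ii) if $\alpha$ is odd, $\mathbf R_\alpha(\mathcal C,Y)\setminus X=\{y\in Y\setminus X: D_{\mathrm{iie}}^{\alpha'}(S_{\mathcal C}(y))\supsetneq\{\emptyset\}\}$; (iii) if $\alpha$ is odd, then for every $i\in\omega$, $\mathbf R_{T^c_{\alpha,i}}(\mathcal C,Y)\setminus X=\{y\in Y\setminus X: D_{\mathrm{iie}}^{\alpha'}(S_{\mathcal C}(y))\cap\omega^i\ne\emptyset\}$.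
   Context: Sequences/trees: $\omega^{<\omega}$ finite sequences, $\omega^i$ those of length $i$, $\sqsubseteq$ extension, a tree is a subset of $\omega^{<\omega}$ closed under initial segments; for $S\subset\omega^{<\omega}$, $\mathrm{cl}_{\mathrm{Tr}}(S)$ is the set of initial segments of elements of $S$; $i^\frown S=\{(i)^\frown s:s\in S\}$. Suslin scheme in $Y$: family $\mathcal C=(C(s))_{s\in\omega^{<\omega}}$ of subsets of $Y$ with $C(t)\subset C(s)$ for $t\sqsupseteq s$; $\mathcal A(\mathcal C)=\bigcup_{\sigma\in\omega^\omega}\bigcap_n C(\sigma|n)$; a Suslin scheme on $X$ is a Suslin scheme in $X$ with $\mathcal A(\mathcal C)\supset X$ (hence $=X$). $\overline{\mathcal C}^Y=(\overline{C(s)\cap Y}^Y)_s$. Admissible maps $\varphi:T\to\omega^{<\omega}$: monotone w.r.t. $\sqsubseteq$ and $|\varphi(t)|=t(0)+\dots+t(k)$. $\mathbf R_T(\mathcal D)=\{x\in D(\emptyset):\exists$ admissible $\varphi:T\to\omega^{<\omega}$, $x\in D(\varphi(t))\ \forall t\in T\}$; $\mathbf R_T(\mathcal C,Y)=\mathbf R_T(\overline{\mathcal C}^Y)$. Trees $T_\beta$: fix bijections $\pi_\beta:\omega\to\beta$ for countable limit $\beta$; $T_0=\{\emptyset\}$, $T_\beta=\{\emptyset\}\cup\bigcup_n n^\frown T_{\beta-1}$ (successor), $T_\beta=\{\emptyset\}\cup\bigcup_n n^\frown T_{\pi_\beta(n)}$ (limit), $T_{\omega_1}=\omega^{<\omega}$.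 Writing $\alpha=\lambda+2n+i$ ($\lambda$ limit or $0$, $n\in\omega$, $i\in\{0,1\}$), $\alpha'=\lambda+n$. Canonical trees: $T^c_\alpha=T_{\alpha'}$ for even $\alpha$; for odd $\alpha$ and $i\in\omega$, $T^c_{\alpha,i}=\{\emptyset\}\cup i^\frown T_{\alpha'}$ and $T^c_\alpha=T^c_{\alpha,1}$. $\mathbf R_\alpha(\mathcal C,Y)=\mathbf R_{T^c_\alpha}(\mathcal C,Y)$. Derivative: for a tree $T$, $D_{\mathrm{iie}}(T)=\{t\in T: T$ contains infinitely many pairwise incomparable extensions of $t$ of pairwise different lengths$\}$; for $S\subset\omega^{<\omega}$, $D^0_{\mathrm{iie}}(S)=\mathrm{cl}_{\mathrm{Tr}}(S)$, $D^{\beta+1}_{\mathrm{iie}}(S)=D_{\mathrm{iie}}(D^\beta_{\mathrm{iie}}(S))$, $D^\lambda_{\mathrm{iie}}(S)=\bigcap_{\beta<\lambda}D^\beta_{\mathrm{iie}}(S)$ for limit $\lambda$. For $y\in Y$, $S_{\mathcal C}(y)=\{s\in\omega^{<\omega}: y\in\overline{C(s)}^Y\}$. *)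

From mathcomp Require Import all_boot.
Set Implicit Arguments. Unset Strict Implicit. Unset Printing Implicit Defensive.

(* omega^{<omega} = seq nat; s ⊑ t is [prefix s t]; sigma|k is [mkseq sigma k]. *)

Definition clTr (S : seq nat -> Prop) (s : seq nat) : Prop :=
  exists u, S u /\ prefix s u.

Definition Diie (T : seq nat -> Prop) (t : seq nat) : Prop :=
  T t /\
  exists f : nat -> seq nat,
    (forall k, T (f k) /\ prefix t (f k)) /\
    (forall k l, k <> l ->
       ~ prefix (f k) (f l) /\ ~ prefix (f l) (f k) /\ size (f k) <> size (f l)).

Definition admissible (T : seq nat -> Prop) (phi : seq nat -> seq nat) : Prop :=
  (forall t1 t2, T t1 -> T t2 -> prefix t1 t2 -> prefix (phi t1) (phi t2)) /\
  (forall t, T t -> size (phi t) = sumn t).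

Definition is_topology (Y : Type) (open : (Y -> Prop) -> Prop) : Prop :=
  open (fun _ => True) /\
  (forall U V, open U -> open V -> open (fun y => U y /\ V y)) /\
  (forall F : (Y -> Prop) -> Prop, (forall U, F U -> open U) ->
     open (fun y => exists U, F U /\ U y)).

Definition closure (Y : Type) (open : (Y -> Prop) -> Prop) (A : Y -> Prop) (y : Y) : Prop :=
  forall U, open U -> U y -> exists z, U z /\ A z.

Definition suslinA (Y : Type) (D : seq nat -> Y -> Prop) (y : Y) : Prop :=
  exists sigma : nat -> nat, forall k, D (mkseq sigma k) y.

Definition suslin_scheme_on (Y : Type) (X : Y -> Prop) (C : seq nat -> Y -> Prop) : Prop :=
  (forall s y, C s y -> X y) /\
  (forall s t, prefix s t -> forall y, C t y -> C s y) /\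
  (forall x, X x -> suslinA C x).

Definition clScheme (Y : Type) (open : (Y -> Prop) -> Prop) (C : seq nat -> Y -> Prop)
  : seq nat -> Y -> Prop := fun s => closure open (C s).

Definition RT (Y : Type) (open : (Y -> Prop) -> Prop) (C : seq nat -> Y -> Prop)
  (T : seq nat -> Prop) (y : Y) : Prop :=
  clScheme open C [::] y /\
  exists phi, admissible T phi /\ forall t, T t -> clScheme open C (phi t) y.

Definition SC (Y : Type) (open : (Y -> Prop) -> Prop) (C : seq nat -> Y -> Prop) (y : Y)
  : seq nat -> Prop := fun s => closure open (C s) y.

(* An ordinal is represented as an element of a type O carrying a strict well-order lt. *)
Definition is_wellorder (O : Type) (lt : O -> O -> Prop) : Prop :=
  (forall a, ~ lt a a) /\
  (forall a b c, lt a b -> lt b c -> lt a c) /\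
  (forall a b, lt a b \/ a = b \/ lt b a) /\
  well_founded lt.

Definition is_zero (O : Type) (lt : O -> O -> Prop) (b : O) : Prop := forall g, ~ lt g b.
Definition is_succ (O : Type) (lt : O -> O -> Prop) (g b : O) : Prop :=
  lt g b /\ forall d, lt g d -> lt d b -> False.
Definition is_limit (O : Type) (lt : O -> O -> Prop) (b : O) : Prop :=
  ~ is_zero lt b /\ forall g, ~ is_succ lt g b.

Fixpoint iter_succ (O : Type) (lt : O -> O -> Prop) (l : O) (k : nat) (a : O) : Prop :=
  match k with
  | 0 => a = l
  | k'.+1 => exists g, iter_succ lt l k' g /\ is_succ lt g a
  end.

(* the fixed bijections pi_beta : omega -> beta for limit beta
   (their existence forces every element of O to be a countable ordinal) *)
Definition pi_ok (O : Type) (lt : O -> O -> Prop) (pi : O -> nat -> O) : Prop :=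
  forall b, is_limit lt b ->
    (forall n, lt (pi b n) b) /\
    (forall n m, pi b n = pi b m -> n = m) /\
    (forall g, lt g b -> exists n, pi b n = g).

Definition is_T_family (O : Type) (lt : O -> O -> Prop) (pi : O -> nat -> O)
  (Tf : O -> seq nat -> Prop) : Prop :=
  forall b s,
    (is_zero lt b -> (Tf b s <-> s = [::])) /\
    (forall g, is_succ lt g b ->
       (Tf b s <-> s = [::] \/ exists n t, s = n :: t /\ Tf g t)) /\
    (is_limit lt b ->
       (Tf b s <-> s = [::] \/ exists n t, s = n :: t /\ Tf (pi b n) t)).

Definition is_Diie_family (O : Type) (lt : O -> O -> Prop)
  (Df : O -> (seq nat -> Prop) -> seq nat -> Prop) : Prop :=
  forall b S s,
    (is_zero lt b -> (Df b S s <-> clTr S s)) /\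
    (forall g, is_succ lt g b -> (Df b S s <-> Diie (Df g S) s)) /\
    (is_limit lt b -> (Df b S s <-> forall g, lt g b -> Df g S s)).

(* alpha even : T^c_alpha = T_{alpha'} *)
Definition Tc_even (O : Type) (Tf : O -> seq nat -> Prop) (a' : O) : seq nat -> Prop :=
  Tf a'.
(* alpha odd : T^c_{alpha,i} = {emptyset} ∪ i^T_{alpha'};  T^c_alpha = T^c_{alpha,1} *)
Definition Tc_odd (O : Type) (Tf : O -> seq nat -> Prop) (a' : O) (i : nat)
  : seq nat -> Prop :=
  fun s => s = [::] \/ exists t, s = i :: t /\ Tf a' t.

From mathcomp Require Import all_boot.
From Stdlib Require Import Classical ClassicalEpsilon.

Set Implicit Arguments. Unset Strict Implicit. Unset Printing Implicit Defensive.

(* For y outside X the tree S_C(y) has no infinite branch, because A(C^Y) = X.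
   On a tree without infinite branches, a node u is in D_iie(S) exactly when S
   contains extensions of u of every length: a node with arbitrarily long
   extensions none of whose children has them yields the required incomparable
   extensions, and if no such node existed above u, choosing children forever
   would build an infinite branch.  By induction on beta, u is then in
   D^beta_iie(S) exactly when T_beta maps admissibly into S above u.  Since y is
   in R_T(C,Y) exactly when T maps admissibly into S_C(y), the three
   characterisations follow, the node (i) of T^c_{alpha,i} being sent to level i. *)

Lemma prefix_takel (T : eqType) (u s : seq T) m :
  prefix u s -> size u <= m -> prefix u (take m s).
Proof. by move=> /prefixP [s' ->] hm; rewrite take_cat ltnNge hm /= prefix_prefix. Qed.

Lemma prefix_nth (T : eqType) (a b : seq T) i x0 :
  prefix a b -> i < size a -> nth x0 a i = nth x0 b i.
Proof. by move=> /prefixP [s' ->] hi; rewrite nth_cat hi. Qed.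

Lemma prefix_rcons_nth (T : eqType) (v w : seq T) x0 :
  prefix v w -> size v < size w -> prefix (rcons v (nth x0 w (size v))) w.
Proof.
move=> /prefixP [[|x s'] ->]; first by rewrite cats0 ltnn.
by rewrite nth_cat ltnn subnn -cats1 -cat1s catA prefix_prefix.
Qed.

Lemma injective_unbounded (g : nat -> nat) : injective g -> forall m, exists k, m <= g k.
Proof.
move=> ginj m; apply: NNPP => hne.
have hlt k : g k < m by rewrite ltnNge; apply/negP => hk; apply: hne; exists k.
pose h (k : 'I_m.+1) : 'I_m := Ordinal (hlt k).
have hinj : injective h by move=> k l /(congr1 val) /ginj /val_inj.
by have := leq_card h hinj; rewrite !card_ord ltnn.
Qed.

Definition tree (T : seq nat -> Prop) := forall s t, prefix s t -> T t -> T s.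

Definition well_founded_tree (T : seq nat -> Prop) :=
  forall sigma : nat -> nat, ~ (forall k, T (mkseq sigma k)).

Definition unbounded (T : seq nat -> Prop) (u : seq nat) :=
  forall n, exists w, T w /\ prefix u w /\ n <= size w.

Lemma clTr_tree S u : tree S -> clTr S u <-> S u.
Proof.
move=> trS; split => [[w [Sw puw]]|Su]; first exact: trS puw Sw.
by exists u; split => //; exact: prefix_refl.
Qed.

Lemma unbounded_mem T u : tree T -> unbounded T u -> T u.
Proof. by move=> trT /(_ 0) [w [Tw [puw _]]]; exact: trT puw Tw. Qed.

Lemma unboundedP T u : tree T ->
  unbounded T u <-> forall n, exists w, T w /\ prefix u w /\ size w = size u + n.
Proof.
move=> trT; split=> [Uu n | Eu n].
  have [w [Tw [puw hw]]] := Uu (size u + n).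
  exists (take (size u + n) w); split; first exact: trT (prefix_take _ _) Tw.
  by split; [exact: prefix_takel puw (leq_addr _ _) | rewrite size_takel].
by have [w [Tw [puw sz]]] := Eu n; exists w; rewrite sz leq_addl.
Qed.

Lemma tree_size1P T : tree T ->
  (exists s, T s /\ size s = 1) <-> T [::] /\ exists s, T s /\ s <> [::].
Proof.
move=> trT; split => [[s [Ts s1]]|[_ [s [Ts ns]]]].
  split; first exact: trT (prefix0s s) Ts.
  by exists s; split => // e; rewrite e in s1.
exists (take 1 s); split; first exact: trT (prefix_take _ _) Ts.
by case: s ns {Ts} => [|x s] //= _; rewrite take0.
Qed.

Lemma Diie_tree T : tree T -> tree (Diie T).
Proof.
move=> trT s t pst [Tt [f [Hf Hd]]]; split; first exact: trT pst Tt.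
exists f; split => // k; split; [exact: (Hf k).1 | exact: prefix_trans pst (Hf k).2].
Qed.

Lemma Diie_unbounded T u : Diie T u -> unbounded T u.
Proof.
move=> [_ [f [Hf Hd]]] n.
have sinj : injective (fun k => size (f k)).
  by move=> k l e; apply: NNPP => hkl; exact: (Hd _ _ hkl).2.2 e.
have [k hk] := injective_unbounded sinj n.
by have [Tfk pfk] := Hf k; exists (f k).
Qed.

Lemma Diie_of_chain T u (f : nat -> seq nat) : T u ->
  (forall k, T (f k) /\ prefix u (f k)) ->
  {homo size \o f : l k / l < k} ->
  (forall l k, l < k -> ~ prefix (f l) (f k)) -> Diie T u.
Proof.
move=> Tu Hf size_inc npre; split => //; exists f; split => // k l.
have nback k' l' : l' < k' -> ~ prefix (f k') (f l').
  by move=> /size_inc /= hlt /size_prefix; rewrite leqNgt hlt.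
have size_neq k' l' : l' < k' -> size (f k') <> size (f l').
  by move=> /size_inc /= hlt e; rewrite e ltnn in hlt.
case: (ltngtP k l) => // hkl _.
  by split; [exact: npre | split; [exact: nback | move/esym; exact: size_neq]].
by split; [exact: nback | split; [exact: npre | exact: size_neq]].
Qed.

Lemma extendable_branch T (P : seq nat -> Prop) u : tree T ->
  (forall v, P v -> T v) -> (forall v, P v -> exists j, P (rcons v j)) -> P u ->
  ~ well_founded_tree T.
Proof.
move=> trT PT Pext Pu wfT.
have ext v : exists j, P v -> P (rcons v j).
  by case: (classic (P v)) => [/Pext [j hj]|nPv]; [exists j | exists 0].
have [g hg] := ClassicalEpsilon.choice _ ext.
pose vs := fix vs k := if k is k'.+1 then rcons (vs k') (g (vs k')) else u.
have Pvs k : P (vs k) by elim: k => //= k; exact: hg.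
have size_vs k : size (vs k) = size u + k.
  by elim: k => [|k IH] /=; rewrite ?addn0 // size_rcons IH addnS.
have vs_mono : {homo vs : k m / k <= m >-> prefix k m}.
  by apply: homo_leq => [|? ? ?|k]; [exact: prefix_refl|exact: prefix_trans|exact: prefix_rcons].
apply: (wfT (fun m => nth 0 (vs m.+1) m)) => k.
suff <- : take k (vs k) = mkseq (fun m => nth 0 (vs m.+1) m) k.
  exact: trT (prefix_take _ _) (PT _ (Pvs k)).
apply: (@eq_from_nth _ 0); first by rewrite size_mkseq size_takel // size_vs leq_addl.
move=> i; rewrite size_takel ?size_vs ?leq_addl // => ik.
rewrite nth_take // nth_mkseq // (prefix_nth _ (vs_mono _ _ ik)) //.
by rewrite size_vs addnS ltnS leq_addl.
Qed.

Lemma unbounded_maximal T u : tree T -> well_founded_tree T -> unbounded T u ->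
  exists2 v : seq nat, prefix u v & unbounded T v /\ forall j, ~ unbounded T (rcons v j).
Proof.
move=> trT wfT Uu; apply: NNPP => hno.
apply: (@extendable_branch T (fun v => prefix u v /\ unbounded T v) u trT _ _ _ wfT).
- by move=> v [_ Uv]; exact: unbounded_mem.
- move=> v [puv Uv]; apply: NNPP => hne; apply: hno; exists v => //; split => // j Uj.
  by apply: hne; exists j; split => //; exact: prefix_trans puv (prefix_rcons _ _).
- by split => //; exact: prefix_refl.
Qed.

Lemma Diie_of_bounded_children T v : tree T -> unbounded T v ->
  (forall j, ~ unbounded T (rcons v j)) -> Diie T v.
Proof.
move=> trT Uv Bv.
have bound j : exists n, forall w, T w -> prefix (rcons v j) w -> size w < n.
  have /not_all_ex_not [n hn] := Bv j.
  by exists n => w Tw pw; rewrite ltnNge; apply/negP => hle; apply: hn; exists w.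
have [B hB] := ClassicalEpsilon.choice _ bound.
have long N : exists w, T w /\ prefix v w /\ size v + N < size w by exact: Uv.
have [p hp] := ClassicalEpsilon.choice _ long.
(* f (k+1) is longer than every extension of the child of v through which f k
   passes, so no later f k' can extend f k. *)
pose h := fix h k :=
  if k is k'.+1 then maxn (size (p (h k'))) (B (nth 0 (p (h k')) (size v))) else 0.
pose f k := p (h k).
have h_lt k : h k < size (f k) by apply: leq_ltn_trans (hp _).2.2; exact: leq_addl.
have h_mono : {homo h : l k / l <= k}.
  apply: homo_leq => [//|? ? ?|k]; first exact: leq_trans.
  exact: ltnW (leq_trans (h_lt k) (leq_maxl _ _)).
apply: (@Diie_of_chain _ _ f); first exact: unbounded_mem.
- by move=> k; split; [exact: (hp _).1 | exact: (hp _).2.1].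
- apply: homo_ltn => [? ? ?|k]; first exact: ltn_trans.
  exact: leq_ltn_trans (leq_maxl _ _) (h_lt k.+1).
move=> l k lk plk.
have pc : prefix (rcons v (nth 0 (f l) (size v))) (f k).
  apply: prefix_trans plk; apply: prefix_rcons_nth; first exact: (hp _).2.1.
  exact: leq_ltn_trans (leq_addr _ _) (hp _).2.2.
have := hB _ _ (hp (h k)).1 pc; rewrite ltnNge => /negP; apply.
exact: leq_trans (leq_maxr _ _) (leq_trans (h_mono _ _ lk) (ltnW (h_lt k))).
Qed.

Lemma DiieP T u : tree T -> well_founded_tree T -> Diie T u <-> unbounded T u.
Proof.
move=> trT wfT; split; first exact: Diie_unbounded.
move=> /(unbounded_maximal trT wfT) [v puv [Uv Bv]].
by apply: (Diie_tree trT puv); exact: Diie_of_bounded_children.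
Qed.

Lemma well_founded_min O (lt : O -> O -> Prop) (P : O -> Prop) : well_founded lt ->
  (exists x, P x) -> exists x, P x /\ forall y, lt y x -> ~ P y.
Proof.
move=> wf [x Px]; apply: NNPP => hno.
elim/(well_founded_ind wf): x Px => x IH Px; apply: hno; exists x; split => // y lyx.
Qed.

Lemma ordinal_cases O (lt : O -> O -> Prop) b :
  is_zero lt b \/ (exists g, is_succ lt g b) \/ is_limit lt b.
Proof.
case: (classic (is_zero lt b)) => [|nz]; first by left.
case: (classic (exists g, is_succ lt g b)) => [|ns]; first by right; left.
by right; right; split => // g sg; apply: ns; exists g.
Qed.

Lemma limit_succ_below O (lt : O -> O -> Prop) b g : is_wellorder lt ->
  is_limit lt b -> lt g b -> exists2 d, is_succ lt g d & lt d b.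
Proof.
move=> [_ [_ [tri wf]]] [_ nsucc] lgb.
have [d [lgd dmin]] := @well_founded_min _ _ (lt g) wf (ex_intro _ b lgb).
have sd : is_succ lt g d by split => // e lge led; exact: dmin e led lge.
exists d => //; case: (tri d b) => [//|[edb|lbd]]; first by subst; case: (nsucc g sd).
by case: (dmin b lbd lgb).
Qed.

Definition rooted_join (G : nat -> seq nat -> Prop) (s : seq nat) : Prop :=
  s = [::] \/ exists n t, s = n :: t /\ G n t.

(* With [u = [::]] these are the admissible maps from [T] into [S]. *)
Definition embedding_at (T S : seq nat -> Prop) u (psi : seq nat -> seq nat) :=
  psi [::] = u /\
  (forall t, T t -> S (psi t) /\ size (psi t) = size u + sumn t) /\
  (forall t1 t2, T t1 -> T t2 -> prefix t1 t2 -> prefix (psi t1) (psi t2)).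

Definition embeds_at (T S : seq nat -> Prop) (u : seq nat) :=
  exists psi, embedding_at T S u psi.

Lemma embeds_at_sub T T' S u :
  (forall s, T' s -> T s) -> embeds_at T S u -> embeds_at T' S u.
Proof.
move=> sT [psi [e0 [hS hm]]]; exists psi; split => //.
by split => [t /sT|t1 t2 /sT T1 /sT T2]; [exact: hS | exact: hm].
Qed.

Lemma embeds_at_ext T T' S u :
  (forall s, T s <-> T' s) -> embeds_at T S u <-> embeds_at T' S u.
Proof. by move=> eqT; split; apply: embeds_at_sub => s /eqT. Qed.

Lemma embeds_at_root T S u : (forall s, T s <-> s = [::]) -> embeds_at T S u <-> S u.
Proof.
move=> eqT; split => [[psi [e0 [hS _]]]|Su].
  by have := (hS _ ((eqT _).2 erefl)).1; rewrite e0.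
exists (fun _ => u); split => //; split => [t /eqT ->|*]; last exact: prefix_refl.
by rewrite addn0.
Qed.

Lemma embeds_at_rooted_joinP S G u : (forall n t, G n t -> G n [::]) ->
  embeds_at (rooted_join G) S u <->
  S u /\ forall n, G n [::] ->
    exists w, embeds_at (G n) S w /\ prefix u w /\ size w = size u + n.
Proof.
have Jcons n t : G n t -> rooted_join G (n :: t) by right; exists n, t.
move=> Groot; split => [[psi [e0 [hS hm]]]|[Su hw]].
  split; first by have := (hS _ (or_introl erefl)).1; rewrite e0.
  move=> n Gn; have sz_n := (hS _ (Jcons _ _ Gn)).2; rewrite /= addn0 in sz_n.
  exists (psi [:: n]); split; last first.
    by split => //; rewrite -{1}e0; exact: hm (or_introl erefl) (Jcons _ _ Gn) (prefix0s _).
  exists (fun t => psi (n :: t)); split => //; split.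
    by move=> t Gt; have [Sp ->] := hS _ (Jcons _ _ Gt); rewrite sz_n addnA.
  by move=> t1 t2 G1 G2 p; apply: hm; try exact: Jcons; rewrite /= eqxx.
have choose_psi n : exists psi, G n [::] ->
    prefix u (psi [::]) /\ size (psi [::]) = size u + n /\
    embedding_at (G n) S (psi [::]) psi.
  case: (classic (G n [::])) => [/hw [w [[psi Epsi] [puw sz]]]|nG]; last by exists id.
  by exists psi; rewrite Epsi.1.
have [ps hps] := ClassicalEpsilon.choice _ choose_psi.
exists (fun t => if t is n :: t' then ps n t' else u); split => //; split.
  move=> t [->|[n [t' [-> Gt]]]] /=; first by rewrite addn0.
  have [_ [sz [_ [hS _]]]] := hps n (Groot _ _ Gt).
  by have [Sp ->] := hS t' Gt; rewrite sz addnA.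
move=> t1 t2 [->|[n1 [t1' [-> G1]]]] [->|[n2 [t2' [-> G2]]]] //=.
- by rewrite prefix_refl.
- have [pu [_ [_ [_ hm]]]] := hps n2 (Groot _ _ G2).
  by move=> _; apply: prefix_trans pu (hm _ _ (Groot _ _ G2) G2 (prefix0s _)).
- move=> /andP [/eqP en p]; subst n2.
  by have [_ [_ [_ [_ hm]]]] := hps n1 (Groot _ _ G1); exact: hm _ _ G1 G2 p.
Qed.

Lemma embeds_at_rooted_join_totalP S G u : tree S -> (forall n, G n [::]) ->
  embeds_at (rooted_join G) S u <->
  forall n, exists w, embeds_at (G n) S w /\ prefix u w /\ size w = size u + n.
Proof.
move=> trS Gnil; rewrite embeds_at_rooted_joinP //.
split => [[_ hw] n|hw]; first exact: hw.
split=> [|n _]; last exact: hw.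
have [w [[psi [e0 [hS _]]] [puw _]]] := hw 0.
by apply: trS puw _; rewrite -e0; exact: (hS _ (Gnil 0)).1.
Qed.

Section SuslinScheme.

Variables (Y : Type) (open : (Y -> Prop) -> Prop) (C : seq nat -> Y -> Prop).

Lemma SC_tree X y : suslin_scheme_on X C -> tree (SC open C y).
Proof.
move=> [_ [C_mono _]] s t pst Ct U oU Uy; have [z [Uz Ctz]] := Ct U oU Uy.
by exists z; split => //; exact: C_mono pst z Ctz.
Qed.

Lemma SC_wf (X : Y -> Prop) y :
  (forall y, suslinA (clScheme open C) y -> X y) -> ~ X y -> well_founded_tree (SC open C y).
Proof. by move=> AX nX sigma hs; apply/nX/AX; exists sigma. Qed.

Lemma RT_embedsP T y : T [::] -> RT open C T y <-> embeds_at T (SC open C y) [::].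
Proof.
move=> T0; split => [[_ [phi [[phi_mono phi_size] phi_S]]]|[psi [e0 [hS hm]]]].
  have e0 : phi [::] = [::] by apply/size0nil; rewrite phi_size.
  exists phi; split => //; split => // t Tt.
  by split; [exact: phi_S | rewrite phi_size].
split; first by rewrite -e0; exact: (hS _ T0).1.
exists psi; split; first by split => // t Tt; rewrite (hS t Tt).2.
by move=> t Tt; exact: (hS t Tt).1.
Qed.

End SuslinScheme.

Section IteratedDerivative.

Variables (O : Type) (lt : O -> O -> Prop) (pi : O -> nat -> O).
Variables (Tf : O -> seq nat -> Prop) (Df : O -> (seq nat -> Prop) -> seq nat -> Prop).
Hypotheses (lt_wo : is_wellorder lt) (pi_enum : pi_ok lt pi).
Hypotheses (Tf_rec : is_T_family lt pi Tf) (Df_rec : is_Diie_family lt Df).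

Lemma Tf_nil b : Tf b [::].
Proof.
have [Tz [Ts Tl]] := Tf_rec b [::].
case: (ordinal_cases lt b) => [z|[[g sg]|l]]; first exact/(Tz z).
  by apply/(Ts g sg); left.
by apply/(Tl l); left.
Qed.

Section FixedTree.

Variable S : seq nat -> Prop.
Hypothesis S_tree : tree S.

Lemma Df_sub_tree b : (forall s, Df b S s -> S s) /\ tree (Df b S).
Proof.
elim/(well_founded_ind lt_wo.2.2.2): b => b IH.
case: (ordinal_cases lt b) => [z|[[g sg]|l]].
- split=> [s|s t pst]; rewrite !((Df_rec b S _).1 z) !clTr_tree //; exact: S_tree.
- have [IHsub IHtree] := IH g sg.1.
  split=> [s|s t pst]; rewrite !((Df_rec b S _).2.1 g sg); first by case=> /IHsub.
  exact: Diie_tree.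
- split=> [s|s t pst]; rewrite !((Df_rec b S _).2.2 l) => Dall.
    have lt0 := (pi_enum l).1 0.
    by apply: (IH _ lt0).1; exact: Dall.
  by move=> g lgb; exact: (IH g lgb).2 _ _ pst (Dall g lgb).
Qed.

Lemma Df_sub b s : Df b S s -> S s.
Proof. exact: (Df_sub_tree b).1. Qed.

Lemma Df_tree b : tree (Df b S).
Proof. exact: (Df_sub_tree b).2. Qed.

Hypothesis S_wf : well_founded_tree S.

Lemma Df_wf b : well_founded_tree (Df b S).
Proof. by move=> sigma hs; exact: S_wf sigma (fun k => Df_sub (hs k)). Qed.

Lemma Df_succP g b u : is_succ lt g b ->
  Df b S u <-> forall n, exists w, Df g S w /\ prefix u w /\ size w = size u + n.
Proof.
by move=> sg; rewrite ((Df_rec b S u).2.1 g sg) DiieP ?unboundedP //;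
  [exact: Df_tree | exact: Df_tree | exact: Df_wf].
Qed.

Lemma Df_limitP b u : is_limit lt b ->
  Df b S u <-> forall n, exists w, Df (pi b n) S w /\ prefix u w /\ size w = size u + n.
Proof.
move=> lb; rewrite ((Df_rec b S u).2.2 lb); split => [Du n|hw g lgb].
  have [d sd ldb] := limit_succ_below lt_wo lb ((pi_enum lb).1 n).
  exact: (Df_succP _ sd).1 (Du d ldb) n.
have [n <-] := (pi_enum lb).2.2 g lgb.
by have [w [Dw [puw _]]] := hw n; exact: Df_tree puw Dw.
Qed.

Lemma Df_embedsP b u : Df b S u <-> embeds_at (Tf b) S u.
Proof.
elim/(well_founded_ind lt_wo.2.2.2): b u => b IH u.
case: (ordinal_cases lt b) => [z|[[g sg]|lb]].
- rewrite ((Df_rec b S u).1 z) clTr_tree // embeds_at_root //.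
  by move=> s; exact: (Tf_rec b s).1 z.
- rewrite (Df_succP _ sg) (embeds_at_ext _ _ (fun s => (Tf_rec b s).2.1 g sg)).
  rewrite embeds_at_rooted_join_totalP // => [|n]; last exact: Tf_nil.
  split=> hw n; have [w [Dw pw]] := hw n; exists w; split => //; exact/(IH g sg.1).
- rewrite (Df_limitP _ lb) (embeds_at_ext _ _ (fun s => (Tf_rec b s).2.2 lb)).
  rewrite embeds_at_rooted_join_totalP // => [|n]; last exact: Tf_nil.
  split=> hw n; have [w [Dw pw]] := hw n; exists w; split => //.
  all: exact/(IH _ ((pi_enum lb).1 n)).
Qed.

End FixedTree.

Section Characterisation.

Variables (Y : Type) (open : (Y -> Prop) -> Prop) (X : Y -> Prop) (C : seq nat -> Y -> Prop).
Hypothesis (C_scheme : suslin_scheme_on X C).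
Hypothesis (A_closure : forall y, suslinA (clScheme open C) y -> X y).

Lemma RT_TfP a' y : ~ X y -> RT open C (Tf a') y <-> exists s, Df a' (SC open C y) s.
Proof.
move=> nX; have S_wf := SC_wf A_closure nX.
have S_tree : tree (SC open C y) := SC_tree C_scheme.
rewrite RT_embedsP; last exact: Tf_nil.
rewrite -(Df_embedsP S_tree S_wf); split => [|[s Ds]]; first by exists [::].
exact: Df_tree (prefix0s s) Ds.
Qed.

Lemma RT_Tc_oddP a' i y : ~ X y ->
  RT open C (Tc_odd Tf a' i) y <-> exists s, Df a' (SC open C y) s /\ size s = i.
Proof.
move=> nX; have S_wf := SC_wf A_closure nX.
have S_tree : tree (SC open C y) := SC_tree C_scheme.
have Tc_join s : Tc_odd Tf a' i s <-> rooted_join (fun n t => n = i /\ Tf a' t) s.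
  split=> [[->|[t [-> Tt]]]|[->|[n [t [-> [-> Tt]]]]]];
    by [left | right; exists i, t | left | right; exists t].
rewrite RT_embedsP; last by left.
rewrite (embeds_at_ext _ _ Tc_join) embeds_at_rooted_joinP; last first.
  by move=> n t [-> _]; split => //; exact: Tf_nil.
split => [[_ /(_ i (conj erefl (Tf_nil a')))] [w [Ew [_ sz]]]|[s [Ds sz]]].
  exists w; split; last by rewrite sz.
  by apply/(Df_embedsP S_tree S_wf); apply: embeds_at_sub Ew => t Tt.
split; first by apply: (Df_sub S_tree); apply: Df_tree (prefix0s s) Ds.
move=> n [-> _]; exists s; split.
  by apply: (@embeds_at_sub (Tf a')) => [t []|]; last exact/(Df_embedsP S_tree S_wf).
by rewrite sz; split; first exact: prefix0s.
Qed.

End Characterisation.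

End IteratedDerivative.

Theorem proposition6p9
  (Y : Type) (open : (Y -> Prop) -> Prop) (X : Y -> Prop) (C : seq nat -> Y -> Prop)
  (O : Type) (lt : O -> O -> Prop) (pi : O -> nat -> O)
  (Tf : O -> seq nat -> Prop) (Df : O -> (seq nat -> Prop) -> seq nat -> Prop)
  (lam a a' : O) (n : nat) :
  is_topology open ->
  suslin_scheme_on X C ->
  (forall y, suslinA (clScheme open C) y <-> X y) ->
  is_wellorder lt -> pi_ok lt pi -> is_T_family lt pi Tf -> is_Diie_family lt Df ->
  (is_zero lt lam \/ is_limit lt lam) ->
  iter_succ lt lam n a' ->
  (* (i) alpha = lam + 2n even, alpha' = lam + n *)
  (iter_succ lt lam (2 * n) a ->
     forall y, (RT open C (Tc_even Tf a') y /\ ~ X y) <->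
               (~ X y /\ exists s, Df a' (SC open C y) s)) /\
  (* alpha = lam + 2n + 1 odd, alpha' = lam + n *)
  (iter_succ lt lam (2 * n).+1 a ->
     (* (ii) *)
     (forall y, (RT open C (Tc_odd Tf a' 1) y /\ ~ X y) <->
                (~ X y /\ Df a' (SC open C y) [::] /\
                 exists s, Df a' (SC open C y) s /\ s <> [::])) /\
     (* (iii) *)
     (forall i y, (RT open C (Tc_odd Tf a' i) y /\ ~ X y) <->
                  (~ X y /\ exists s, Df a' (SC open C y) s /\ size s = i))).
Proof.
move=> _ C_scheme A_eq lt_wo pi_enum Tf_rec Df_rec _ _.
have A_closure y : suslinA (clScheme open C) y -> X y by move/A_eq.
have even y := RT_TfP lt_wo pi_enum Tf_rec Df_rec C_scheme A_closure a' (y := y).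
have odd i y := RT_Tc_oddP lt_wo pi_enum Tf_rec Df_rec C_scheme A_closure a' i (y := y).
split=> [_ y | _]; first by move: (even y); tauto.
split=> [y | i y]; last by move: (odd i y); tauto.
have S_tree : tree (SC open C y) := SC_tree C_scheme.
move: (odd 1 y) (tree_size1P (Df_tree lt_wo pi_enum Df_rec S_tree (b := a'))); tauto.
Qed.
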